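(* Let $\Omega\subset\mathbb{R}^n$ ($n\ge1$) be a bounded domain, $T>0$, $\delta\in(0,1)\cup(1,2)$, $\bar Q:=\bar\Omega\times[0,T]$ and $Q:=\Omega\times(0,T]$. Let $u$ be a classical solution of the initial-boundary value problem described in the context. Assume that $\partial^{\bar\delta}u(x,t)/\partial t^{\bar\delta}$ is continuous on $\bar Q$. Then \[ \lim_{t\to0^+} D_t^\delta u(x,t)=0\quad\text{for each } x\in\Omega . \]
   Context: Set $\bar\delta=1$ if $0<\delta<1$ and $\bar\delta=2$ if $1<\delta<2$. The Caputo fractional derivative is \[ D_t^\delta g(x,t):=\frac{1}{\Gamma(\bar\delta-\delta)}\int_0^t (t-s)^{\bar\delta-\delta-1}\,\frac{\partial^{\bar\delta}g(x,s)}{\partial s^{\bar\delta}}\,ds,\qquad x\in\Omega,\ 0<t\le T. \] The problem is: $D_t^\delta u-\sum_{i,j=1}^n p_{ij}(x,t)\,\partial^2u/\partial x_i\partial x_j+\sum_{i=1}^n q_i(x,t)\,\partial u/\partial x_i+r(x,t)u=f(x,t)$ for $(x,t)\in Q$; $u(x,t)=\psi(x,t)$ for $(x,t)\in\partial\Omega\times(0,T]$; $u(x,0)=\phi_0(x)$ for $x\in\bar\Omega$; and, only when $1<\delta<2$, $u_t(x,0)=\phi_1(x)$ for $x\in\Omega$. The spatial operator $w\mapsto\sum p_{ij}\partial^2w/\partial x_i\partial x_j+\sum q_i\partial w/\partial x_i+rw$ is uniformly elliptic on $Q$; $p_{ij},q_i,r,\psi,\phi_0,\phi_1$ are continuous on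 the closures of their domains; and $\phi_0(x)=\psi(x,0)$ for all $x\in\partial\Omega$. A classical solution is a function $u$ continuous on $\bar Q$ for which $D_t^\delta u$, $\partial u/\partial x_i$, $\partial^2u/\partial x_i\partial x_j$ exist at every point of $Q$ and the equation and the initial and boundary conditions hold pointwise. *)

From HB Require Import structures.
From mathcomp Require Import all_boot all_order all_algebra.
From mathcomp Require Import all_classical all_reals all_analysis.
Set Implicit Arguments. Unset Strict Implicit. Unset Printing Implicit Defensive.
Import Order.TTheory GRing.Theory Num.Theory.
Import numFieldNormedType.Exports.
Local Open Scope classical_set_scope.
Local Open Scope ring_scope.

Section Defs.
Variable R : realType.

Definition Gamma (z : R) : R :=
  Rintegral lebesgue_measure `[0, +oo[%classic (fun x => x `^ (z - 1) * expR (- x)).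

Definition dbar (d : R) : nat := if d < 1 then 1%N else 2%N.

Definition tder (k : nat) (n : nat) (u : 'rV[R]_n -> R -> R) (x : 'rV[R]_n) (s : R) : R :=
  derive1n k (u x) s.

Definition tder_exists (k : nat) (n : nat) (u : 'rV[R]_n -> R -> R) (x : 'rV[R]_n) (s : R) : Prop :=
  if k == 1%N then derivable (u x) s 1
  else (\forall s' \near s, derivable (u x) s' 1) /\ derivable (derive1 (u x)) s 1.

Definition caputo (d : R) (n : nat) (u : 'rV[R]_n -> R -> R) (x : 'rV[R]_n) (t : R) : R :=
  (Gamma ((dbar d)%:R - d))^-1 *
  Rintegral lebesgue_measure `[0, t]%classic
    (fun s => (t - s) `^ ((dbar d)%:R - d - 1) * tder (dbar d) u x s).

Definition caputo_exists (d : R) (n : nat) (u : 'rV[R]_n -> R -> R) (x : 'rV[R]_n) (t : R) : Prop :=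
  (forall s, 0 < s < t -> tder_exists (dbar d) u x s) /\
  lebesgue_measure.-integrable `[0, t]%classic
    (fun s => ((t - s) `^ ((dbar d)%:R - d - 1) * tder (dbar d) u x s)%:E).

Definition evec (n : nat) (i : 'I_n) : 'rV[R]_n := delta_mx 0 i.

Definition pd (n : nat) (i : 'I_n) (f : 'rV[R]_n -> R) (x : 'rV[R]_n) : R :=
  'D_(evec i) f x.

End Defs.

Arguments Gamma {R}.
Arguments dbar {R}.
Arguments tder {R}.
Arguments tder_exists {R}.
Arguments caputo {R}.
Arguments caputo_exists {R}.
Arguments evec {R n}.
Arguments pd {R n}.

From HB Require Import structures.
From mathcomp Require Import all_boot all_order all_algebra.
From mathcomp Require Import all_classical all_reals all_analysis.
From mathcomp Require Import measurable_realfun lra.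
Import Order.TTheory GRing.Theory Num.Theory.
Import numFieldNormedType.Exports.
Local Open Scope classical_set_scope.
Local Open Scope ring_scope.

(* Write a := dbar d - d > 0.  Near (x, 0) the continuous extension of the
   dbar-th time derivative of u is bounded by some M, so for small t
     |D_t^d u(x, t)| <= M / |Gamma a| * int_0^t (t - s)^(a - 1) ds
                     =  M / |Gamma a| * t^a / a,
   which tends to 0.  For a < 1 the kernel integral is improper; it is
   obtained from the fundamental theorem of calculus on [0, c] and monotone
   convergence as c increases to t. *)

Section weakly_singular_kernel.
Context {R : realType}.
Local Notation mu := (@lebesgue_measure R).

Lemma is_derive_subr_powR (t b s : R) : s < t ->
  is_derive s 1 (fun s => (t - s) `^ b) (- (b * (t - s) `^ (b - 1))).
Proof.
move=> st.
have dsub : is_derive s 1 (fun s => t - s) (-1).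
  by have := is_deriveB (is_derive_cst t s 1) (is_derive_id s 1); rewrite sub0r.
have dpow : is_derive (t - s) 1 ((@powR R) ^~ b) (b * (t - s) `^ (b - 1)).
  by apply: is_derive1_powR; rewrite subr_gt0.
by have := is_derive1_comp (g := fun s => t - s) dpow dsub; rewrite mulrN1.
Qed.

Lemma measurable_subr_powR (t b : R) :
  measurable_fun setT (fun s : R => (t - s) `^ b).
Proof. exact: measurableT_comp (@measurable_powR R b) (measurable_funB _ _). Qed.

Lemma ge0_integral_itv_oo_le (a b L : R) (f : R -> R) : a < b ->
  measurable_fun setT f -> (forall s, 0 <= f s) ->
  (forall c, a < c < b -> (\int[mu]_(s in `[a, c]) (f s)%:E <= L%:E)%E) ->
  (\int[mu]_(s in `]a, b[) (f s)%:E <= L%:E)%E.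
Proof.
move=> ab mf f0 fL.
have ba0 : 0 < b - a by rewrite subr_gt0.
pose c m := b - (b - a) / m.+2%:R.
have c_itv m : a < c m < b.
  rewrite /c ltrBlDl ltrDr divr_gt0 ?ltr0n // andbT ltrBrDl -ltrBrDr.
  by rewrite ltr_pdivrMr ?ltr0n // ltr_pMr // ltr1n.
pose F m := `[a, c m]%classic.
have ndF : nondecreasing_seq F.
  move=> m k mk; rewrite subsetEset => s; rewrite /F /= !in_itv /= => /andP[-> sc].
  rewrite (le_trans sc) // lerB // ler_pM2l // lef_pV2 ?posrE ?ltr0n // ler_nat.
  by rewrite !ltnS.
have cover : `]a, b[ `<=` \bigcup_m F m.
  move=> s; rewrite /= in_itv /= => /andP[sa sb].
  have bs0 : 0 < b - s by rewrite subr_gt0.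
  exists (Num.truncn ((b - a) / (b - s))) => //=.
  have := truncnS_gt ((b - a) / (b - s)); rewrite ltr_pdivrMr //.
  move: (Num.truncn _) => m hm.
  have : (b - a) / m.+2%:R <= b - s.
    rewrite ler_pdivrMr ?ltr0n // -[m.+2%:R]natr1; nra.
  rewrite /F /= in_itv /= (ltW sa) /c /=; move: (_ / _) => y; lra.
have mfE : measurable_fun setT (EFin \o f) by exact/measurable_EFinP.
have mfF m : measurable_fun (F m) (EFin \o f) by exact: measurable_funS mfE.
have f0E s : (0 <= (f s)%:E)%E by rewrite lee_fin.
apply: (@le_trans _ _ (\int[mu]_(s in \bigcup_m F m) (f s)%:E)%E).
  apply: ge0_subset_integral => //; last exact: measurable_funS mfE.
  by apply: bigcupT_measurable => m; exact: measurable_itv.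
have cvF := ge0_nondecreasing_set_cvg_integral (mu := mu) ndF
  (fun m => measurable_itv _) mfF (fun m s _ => f0E s).
rewrite -(cvg_lim _ cvF) //; apply: lime_le; first by apply/cvg_ex; eexists; exact: cvF.
by apply: nearW => m; exact: fL.
Qed.

Lemma integral_subr_powR_le (a t : R) : 0 < a -> 0 < t ->
  (\int[mu]_(s in `]0%R, t%R[) ((t - s) `^ (a - 1))%:E <= (t `^ a / a)%:E)%E.
Proof.
move=> a0 t0; apply: ge0_integral_itv_oo_le => // [|s|c /andP[c0 ct]].
- exact: measurable_subr_powR.
- exact: powR_ge0.
pose F s := - a^-1 * (t - s) `^ a.
have dF s : s < t -> is_derive s 1 F ((t - s) `^ (a - 1)).
  move=> st; have := is_deriveZ (- a^-1) (is_derive_subr_powR t a s st).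
  by rewrite scalerN scaleNr opprK -[_ *: _]/(_ * _) mulrA mulVf ?mul1r ?gt_eqF.
rewrite (@continuous_FTC2 _ _ F) //.
- rewrite -EFinB lee_fin /F subr0.
  have : 0 <= a^-1 * (t - c) `^ a by rewrite mulr_ge0 ?invr_ge0 ?powR_ge0 ?ltW.
  rewrite [t `^ a / a]mulrC; lra.
- apply: derivable_within_continuous => s; rewrite in_itv /= => /andP[_ sc].
  (* All implicits of [ex_derive] are left open so that the measurable-type
     copy of R occurring in the goal can unify with R. *)
  exact: (@ex_derive _ _ _ _ _ _ _
    (is_derive_subr_powR t (a - 1) s (le_lt_trans sc ct))).
- split.
  + move=> s; rewrite in_itv /= => /andP[_ sc].
    exact: (@ex_derive _ _ _ _ _ _ _ (dF _ (lt_trans sc ct))).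
  + apply: cvg_at_right_filter; apply: differentiable_continuous.
    exact/derivable1_diffP/(@ex_derive _ _ _ _ _ _ _ (dF _ t0)).
  + apply: cvg_at_left_filter; apply: differentiable_continuous.
    exact/derivable1_diffP/(@ex_derive _ _ _ _ _ _ _ (dF _ ct)).
- move=> s; rewrite in_itv /= => /andP[_ sc].
  by rewrite derive1E (@derive_val _ _ _ _ _ _ _ (dF _ (lt_trans sc ct))).
Qed.

Lemma norm_Rintegral_subr_powR_le (a t M : R) (h : R -> R) : 0 < a -> 0 < t ->
  mu.-integrable `[0, t] (fun s => ((t - s) `^ (a - 1) * h s)%:E) ->
  (forall s, 0 < s < t -> `|h s| <= M) ->
  `|\int[mu]_(s in `[0, t]) ((t - s) `^ (a - 1) * h s)| <= M * (t `^ a / a).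
Proof.
move=> a0 t0 kh hM.
have M0 : 0 <= M.
  apply: le_trans (hM (t / 2) _) => //.
  by rewrite divr_gt0 //= ltr_pdivrMr // ltr_pMr // ltr1n.
apply: le_trans (le_normr_Rintegral _ kh) _ => //.
have mkh : measurable_fun `[0, t] (fun s => (t - s) `^ (a - 1) * h s).
  by apply/measurable_EFinP; case/integrableP: kh.
have mabs : measurable_fun `[0, t] (fun s => (`|(t - s) `^ (a - 1) * h s|)%:E).
  by apply/measurable_EFinP; apply: measurableT_comp mkh.
have oc_cc : `]0, t] `<=` `[0, t].
  by move=> s /=; rewrite !in_itv /= => /andP[/ltW -> ->].
have oo_cc : `]0, t[ `<=` `[0, t].
  by move=> s /=; rewrite !in_itv /= => /andP[/ltW -> /ltW ->].
rewrite -lee_fin /Rintegral fineK; last first.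
  rewrite ge0_fin_numE; last by apply: integral_ge0 => s _; rewrite lee_fin.
  by case/integrableP: kh.
rewrite -integral_itv_obnd_cbnd; last exact: measurable_funS mabs.
rewrite -integral_itv_bndo_bndc; last exact: measurable_funS mabs.
apply: (@le_trans _ _ (\int[mu]_(s in `]0%R, t%R[) (M%:E * ((t - s) `^ (a - 1))%:E))%E).
  apply: ge0_le_integral => //; first exact: measurable_funS mabs.
  - apply/measurable_EFinP; apply: (measurable_funS measurableT) => //.
    exact: measurable_funM (measurable_cst M) (measurable_subr_powR t (a - 1)).
  - move=> s; rewrite /= in_itv /= => hs.
    rewrite -EFinM lee_fin normrM ger0_norm ?powR_ge0 // mulrC.
    by rewrite ler_wpM2r ?powR_ge0 ?hM.
rewrite ge0_integralZl_EFin //; last 2 first.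
- by move=> s _; rewrite lee_fin powR_ge0.
- apply/measurable_EFinP; apply: (measurable_funS measurableT) => //.
  exact: measurable_subr_powR.
by rewrite EFinM lee_wpmul2l ?lee_fin ?integral_subr_powR_le.
Qed.

End weakly_singular_kernel.

Lemma within_continuous_near_norm_le {T : topologicalType} {R : realFieldType}
    {A : set T} {g : T -> R} {z : T} :
  {within A, continuous g} -> A z -> \forall y \near z, A y -> `|g y| <= `|g z| + 1.
Proof.
move=> gc Az.
have near1 : \forall y \near z, A y -> `|g z - g y| < 1.
  exact: (cvgrPdist_lt _ _).1 ((subspace_continuousP _ _).1 gc z Az) 1 ltr01.
apply: filterS near1 => y gy1 Ay.
have := gy1 Ay; have := lerB_dist (g y) (g z); rewrite distrC; lra.
Qed.

Lemma near_slice {T U : topologicalType} {P : T * U -> Prop} {x : T} {s0 : U} :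
  (\forall y \near (x, s0), P y) -> \forall s \near s0, P (x, s).
Proof. move=> Pnear; exact: (cvg_pair (cvg_cst x) cvg_id Pnear). Qed.

Lemma dbar_sub_gt0 {R : realType} (d : R) : 0 < d < 2 -> 0 < (dbar d)%:R - d.
Proof. by case/andP=> d0 d2; rewrite /dbar subr_gt0; case: ifPn. Qed.

Section caputo_near_zero.
Context {R : realType} {d : R} {n : nat} {u : 'rV[R]_n -> R -> R} {x : 'rV[R]_n}.
Hypothesis d02 : 0 < d < 2.
Local Notation a := ((dbar d)%:R - d).

Lemma norm_caputo_le (t M : R) : 0 < t -> caputo_exists d n u x t ->
  (forall s, 0 < s < t -> `|tder (dbar d) n u x s| <= M) ->
  `|caputo d n u x t| <= `|(Gamma a)^-1| * M / a * t `^ a.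
Proof.
move=> t0 [_ kh] hM; rewrite /caputo normrM mulrAC -!mulrA ler_wpM2l //.
exact: norm_Rintegral_subr_powR_le (dbar_sub_gt0 d d02) t0 kh hM.
Qed.

Lemma caputo_cvg0 (e M : R) : 0 < e ->
  (forall t, 0 < t < e -> caputo_exists d n u x t) ->
  (forall s, 0 < s < e -> `|tder (dbar d) n u x s| <= M) ->
  caputo d n u x t @[t --> 0^'+] --> 0.
Proof.
move=> e0 ex hM; set C := `|(Gamma a)^-1| * M / a.
have bound0 : C * t `^ a @[t --> 0^'+] --> 0.
  rewrite -[X in _ --> X](mulr0 C); apply: cvgM; first exact: cvg_cst.
  exact: powR_cvg0 (dbar_sub_gt0 d d02).
have nbound0 : - (C * t `^ a) @[t --> 0^'+] --> 0.
  by rewrite -[X in _ --> X]oppr0; exact: cvgN.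
apply: (squeeze_cvgr _ nbound0 bound0).
near=> t; rewrite -ler_norml.
have t0 : 0 < t by near: t; exact: nbhs_right_gt.
have te : t < e by near: t; exact: nbhs_right_lt.
apply: norm_caputo_le => [//||s /andP[s0 st]]; first by apply: ex; rewrite t0.
by apply: hM; rewrite s0 (lt_trans st).
Unshelve. all: end_near.
Qed.

End caputo_near_zero.

Theorem corollary2p2 (R : realType) (n : nat) (Omega : set 'rV[R]_n) (T d : R)
  (p : 'I_n -> 'I_n -> 'rV[R]_n -> R -> R) (q : 'I_n -> 'rV[R]_n -> R -> R)
  (r f psi : 'rV[R]_n -> R -> R) (phi0 phi1 : 'rV[R]_n -> R)
  (u : 'rV[R]_n -> R -> R) :
  (0 < n)%N ->
  (* Omega is a bounded domain *)
  open Omega -> connected Omega -> Omega !=set0 ->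
  (exists M : R, forall x, Omega x -> `|x| <= M) ->
  0 < T ->
  0 < d < 2 -> d != 1 ->
  let Qbar := [set z : 'rV[R]_n * R | closure Omega z.1 /\ 0 <= z.2 <= T] in
  let Q := [set z : 'rV[R]_n * R | Omega z.1 /\ 0 < z.2 <= T] in
  let bdry := closure Omega `\` Omega in
  (* uniform ellipticity on Q *)
  (exists lam : R, 0 < lam /\ forall x t, Q (x, t) -> forall xi : 'rV[R]_n,
      \sum_(i < n) \sum_(j < n) p i j x t * xi 0 i * xi 0 j
        >= lam * \sum_(i < n) xi 0 i ^+ 2) ->
  (* continuity of the data on the closures of their domains *)
  (forall i j, {within Qbar, continuous (fun z => p i j z.1 z.2)}) ->
  (forall i, {within Qbar, continuous (fun z => q i z.1 z.2)}) ->
  {within Qbar, continuous (fun z => r z.1 z.2)} ->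
  {within [set z | bdry z.1 /\ 0 <= z.2 <= T], continuous (fun z => psi z.1 z.2)} ->
  {within closure Omega, continuous phi0} ->
  (1 < d -> {within closure Omega, continuous phi1}) ->
  (forall x, bdry x -> phi0 x = psi x 0) ->
  (* u is a classical solution *)
  {within Qbar, continuous (fun z => u z.1 z.2)} ->
  (forall x t, Q (x, t) ->
     caputo_exists d n u x t /\
     (forall i, derivable (fun y => u y t) x (evec i)) /\
     (forall i j, derivable (pd j (fun y => u y t)) x (evec i))) ->
  (forall x t, Q (x, t) ->
     caputo d n u x t
     - \sum_(i < n) \sum_(j < n) p i j x t * pd i (pd j (fun y => u y t)) x
     + \sum_(i < n) q i x t * pd i (fun y => u y t) x
     + r x t * u x t = f x t) ->
  (forall x t, bdry x -> 0 < t <= T -> u x t = psi x t) ->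
  (forall x, closure Omega x -> u x 0 = phi0 x) ->
  (1 < d -> forall x, Omega x ->
     (fun h => h^-1 * (u x h - u x 0)) @ (0 : R)^'+ --> phi1 x) ->
  (* extra hypothesis: the dbar-th time derivative of u is continuous on Qbar,
     i.e. it exists on closure(Omega) x (0,T) and extends continuously to Qbar *)
  (exists g : 'rV[R]_n * R -> R,
     {within Qbar, continuous g} /\
     forall x t, closure Omega x -> 0 < t < T ->
       tder_exists (dbar d) n u x t /\ tder (dbar d) n u x t = g (x, t)) ->
  forall x, Omega x -> caputo d n u x t @[t --> (0 : R)^'+] --> 0.
Proof.
move=> _ _ _ _ _ T0 d02 _ Qbar Q bdry _ _ _ _ _ _ _ _ _ solves _ _ _ _ [g [gc hg]] x Ox.
have Ox_cl := subset_closure Ox.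
have Qx0 : Qbar (x, 0) by split; rewrite //= lexx ltW.
have [e e0 gM] := (nbhs_ballP _ _).1 (near_slice (within_continuous_near_norm_le gc Qx0)).
apply: (caputo_cvg0 d02 (Num.min e T) (`|g (x, 0)| + 1)) => [|t|s].
- by rewrite lt_min e0 T0.
- rewrite lt_min => /andP[t0 /andP[_ tT]].
  by case: (solves x t) => //; split => //=; rewrite t0 ltW.
- rewrite lt_min => /andP[s0 /andP[se sT]].
  have sT' : 0 < s < T by rewrite s0 sT.
  have [_ ->] := hg x s Ox_cl sT'.
  apply: gM; first by rewrite /ball /= sub0r normrN gtr0_norm.
  by split => //=; rewrite !ltW.
Qed.
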